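(* Assume (A1), (A2), (B)$_T$ for every $T>0$, (C1), (C2) and (C3). Let $x\in E$, $\varepsilon>0$, and let $\sigma$ be an $\varepsilon$-optimal stopping time for $w(x)$. Then \[ \mathbb{E}^x\{\sigma\}\le\frac{\gamma(x)+\mathbb{E}^x\{\zeta^+\}-w(x)+\varepsilon}{-d(x)}. \]
   Context: Let $(E,\rho)$ be a locally compact metric space with Borel $\sigma$-field, and let $(X_t)_{t\ge0}$ be a Feller–Markov process with right-continuous paths on a filtered space $(\Omega,\mathcal F,(\mathcal F_t))$, taking values in $E$; $\mathbb{P}^x$ denotes the law of the process started at $x$ and $\mathbb{E}^x$ the corresponding expectation. Stopping times are with respect to $(\mathcal F_t)$ and may take the value $+\infty$. Write $P_t(x,\cdot)=\mathbb{P}^x\{X_t\in\cdot\}$, $P_t\phi(x)=\mathbb{E}^x\{\phi(X_t)\}$. (A1) $P_t\,\mathcal C_0\subseteq\mathcal C_0$ for all $t\ge0$, where $\mathcal C_0$ is the space of continuous bounded functions $E\to\mathbb R$ vanishing at infinity. (A2) There are a unique probability measure $\mu$ on $E$, a function $K:E\to(0,\infty)$ bounded on compacts and $h:[0,\infty)\to\mathbb R_+$ with $\int_0^\infty h<\infty$ such that $\|P_t(x,\cdot)-\mu\|_{TV}\le K(x)h(t)$ for all $x,t$; furthermore $\mathbb{E}^x\{K(X_T)\}<\infty$ for each $T\ge0$. Let $f:E\to\mathbb R$ be continuous and bounded and $g:E\to\mathbb R$ continuous (possibly unbounded). (B)$_T$: for every $x\in E$ there is a compact ball $\bar B(x,\delta)$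 such that $\zeta_T=\sup_{t\in[0,T]}|g(X_t)|$ satisfies $\lim_{n\to\infty}\sup_{y\in\bar B(x,\delta)}\mathbb{E}^y\{\zeta_T\mathbf 1_{\{\zeta_T>n\}}\}=0$. (C1) $\zeta^+:=\sup_{t\ge0}g^+(X_t)$ is $\mathbb{P}^x$-integrable for every $x$. (C2) For every $x$ and events $A_T\in\mathcal F_T$: if $\lim_{T\to\infty}\mathbb{P}^x(A_T)=0$ then $\lim_{T\to\infty}\mathbb{E}^x\{\mathbf 1_{A_T}g^-(X_T)\}=0$. (C3) For every $x$ there is $d(x)<0$ with $\gamma(x):=\sup_\tau\liminf_{T\to\infty}\mathbb{E}^x\{\int_0^{\tau\wedge T}(f(X_s)-d(x))ds\}<\infty$. The value function is $w(x)=\sup_\tau\liminf_{T\to\infty}\mathbb{E}^x\{\int_0^{\tau\wedge T}f(X_s)\,ds+g(X_{\tau\wedge T})\}$, supremum over all stopping times. A stopping time $\sigma$ is $\varepsilon$-optimal for $w(x)$ if $\liminf_{T\to\infty}\mathbb{E}^x\{\int_0^{\sigma\wedge T}f(X_s)ds+g(X_{\sigma\wedge T})\}\ge w(x)-\varepsilon$. *)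

From mathcomp Require Import all_boot all_order all_algebra all_classical all_reals all_analysis.
Import Order.TTheory GRing.Theory Num.Theory.
Import numFieldNormedType.Exports.
Set Implicit Arguments.
Unset Strict Implicit.
Unset Printing Implicit Defensive.
Local Open Scope classical_set_scope.
Local Open Scope ring_scope.

Section OptimalStoppingDefs.
Variables (R : realType) (E : pseudoPMetricType R).

Definition Borel := g_sigma_algebraType (@open E).

(* Closed ball {y | rho(x,y) <= r}. *)
Definition cball (x : E) (r : R) : set E :=
  [set y | forall e : R, r < e -> ball x e y].

Variables (d : measure_display) (Omega : measurableType d).

Definition filtration (F : R -> set (set Omega)) :=
  [/\ (forall t, 0 <= t -> sigma_algebra setT (F t)),
      (forall t, 0 <= t -> F t `<=` measurable) &
      (forall s t, 0 <= s -> s <= t -> F s `<=` F t)].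

Definition markov_process (F : R -> set (set Omega))
    (P : E -> probability Omega R) (X : R -> Omega -> E) :=
  [/\ filtration F,
      (forall t, 0 <= t -> forall B : set Borel, measurable B -> F t (X t @^-1` B)),
      (forall w t, 0 <= t -> (X ^~ w) s @[s --> t^'+] --> X t w),
      (forall x, P x [set w | X 0 w = x] = 1%E) &
      (forall x s t, 0 <= s -> 0 <= t -> forall A, F t A ->
         forall B : set Borel, measurable B ->
         P x (A `&` X (t + s) @^-1` B) =
         (\int[P x]_(w in A) P (X t w) (X s @^-1` B))%E)].

Definition stopping_time (F : R -> set (set Omega)) (tau : Omega -> \bar R) :=
  (forall w, (0 <= tau w)%E) /\
  (forall t, 0 <= t -> F t [set w | (tau w <= t%:E)%E]).

Definition stopT (tau : Omega -> \bar R) (T : R) (w : Omega) : R :=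
  fine (Order.min (tau w) T%:E).

Definition liminfT (u : R -> \bar R) : \bar R :=
  ereal_sup [set ereal_inf [set u T | T in [set T | M <= T]] | M in [set: R]].

Variables (P : E -> probability Omega R) (X : R -> Omega -> E).

Definition payoff (phi psi : E -> R) (x : E) (tau : Omega -> \bar R) (T : R)
  : \bar R :=
  (\int[P x]_w
     ((\int[lebesgue_measure]_(s in `[0%R, stopT tau T w]) (phi (X s w))%:E)
      + (psi (X (stopT tau T w) w))%:E))%E.

Definition value (F : R -> set (set Omega)) (phi psi : E -> R) (x : E) : \bar R :=
  ereal_sup [set liminfT (payoff phi psi x tau) | tau in stopping_time F].

Definition wfun F (f g : E -> R) (x : E) := value F f g x.

Definition gammafun F (f : E -> R) (dx : R) (x : E) :=
  value F (fun y => f y - dx) (fun _ => 0) x.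

Definition eps_optimal F (f g : E -> R) (x : E) (eps : R)
    (sigma : Omega -> \bar R) :=
  stopping_time F sigma /\
  (liminfT (payoff f g x sigma) >= wfun F f g x - eps%:E)%E.

Definition zeta_plus (g : E -> R) (w : Omega) : \bar R :=
  ereal_sup [set (Num.max (g (X t w)) 0)%:E | t in [set t : R | 0 <= t]].

Definition zetaT (g : E -> R) (T : R) (w : Omega) : \bar R :=
  ereal_sup [set (Num.norm (g (X t w)))%:E | t in `[0%R, T]].

Definition C0 (phi : E -> R) :=
  [/\ continuous phi,
      (exists M : R, forall y, `|phi y| <= M) &
      (forall e : R, 0 < e -> exists K : set E,
          compact K /\ forall y, ~ K y -> `|phi y| < e)].

Definition Pt (t : R) (phi : E -> R) (x : E) : R :=
  fine (\int[P x]_w (phi (X t w))%:E)%E.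

Definition A1 := forall t, 0 <= t -> forall phi, C0 phi -> C0 (Pt t phi).

Definition TVdist (x : E) (t : R) (mu : probability Borel R) : \bar R :=
  ereal_sup [set abse (P x (X t @^-1` A) - mu A)%E | A in (measurable : set (set Borel))].

Definition A2cond (mu : probability Borel R) (K : E -> R) (h : R -> R) :=
  [/\ (forall y, 0 < K y),
      (forall C : set E, compact C -> exists M : R, forall y, C y -> K y <= M),
      (forall t, 0 <= t -> 0 <= h t),
      lebesgue_measure.-integrable `[0%R, +oo[ (EFin \o h) &
      ((forall x t, 0 <= t -> (TVdist x t mu <= (K x * h t)%:E)%E) /\
       (forall x T, 0 <= T -> (\int[P x]_w (K (X T w))%:E < +oo)%E))].

Definition A2 (mu : probability Borel R) (K : E -> R) (h : R -> R) :=
  A2cond mu K h /\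
  (forall nu : probability Borel R, (exists K' h', A2cond nu K' h') ->
     forall A : set Borel, measurable A -> nu A = mu A).

Definition condB (g : E -> R) (T : R) :=
  forall x : E, exists delta : R, 0 < delta /\ compact (cball x delta) /\
    (fun n : nat => ereal_sup
       [set (\int[P y]_(w in [set w | (n%:R%:E < zetaT g T w)%E]) zetaT g T w)%E
       | y in cball x delta]) @ \oo --> 0%E.

Definition C1 (g : E -> R) := forall x, (P x).-integrable setT (zeta_plus g).

Definition C2 (F : R -> set (set Omega)) (g : E -> R) :=
  forall x (A : R -> set Omega), (forall T, 0 <= T -> F T (A T)) ->
    P x (A T) @[T --> +oo] --> 0%E ->
    (\int[P x]_(w in A T) (Num.max (- g (X T w)) 0)%:E)%E @[T --> +oo] --> 0%E.

(* (C3), with the choice x |-> d(x) made explicit *)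
Definition C3 F (f : E -> R) (dfun : E -> R) :=
  forall x, dfun x < 0 /\ (gammafun F f (dfun x) x < +oo)%E.

End OptimalStoppingDefs.

(* Write [S_T = sigma /\ T] and [c = -d(x) > 0]. With running reward [f - d(x) = f + c]
   and no terminal reward, the payoff of [sigma] at horizon [T] in the problem defining
   [gamma(x)] is [E int_0^S_T f(X_s) ds + c E S_T], while its payoff for [w(x)] is at most
   [E int_0^S_T f(X_s) ds + E zeta^+], since [g(X_S_T) <= zeta^+]. As [E S_T] increases
   with [T], for [T >= T0] the first payoff exceeds the second by at least
   [c E S_T0 - E zeta^+]; taking liminfs and using [eps]-optimality,
   [gamma(x) >= w(x) - eps - E zeta^+ + c E S_T0], and monotone convergence in [T0] bounds
   [E sigma]. Here [gamma(x)] is finite: [< +oo] by (C3), and [>= 0] by stopping at once.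
   From the Markov structure only adaptedness and right-continuity of the paths are used,
   to make the payoffs measurable. *)

From mathcomp Require Import all_boot all_order all_algebra all_classical all_reals all_analysis.
From mathcomp Require Import measurable_realfun lebesgue_integral_fubini.
From mathcomp Require Import lra.
Import Order.TTheory GRing.Theory Num.Theory.
Import numFieldNormedType.Exports.

Set Implicit Arguments.
Unset Strict Implicit.
Unset Printing Implicit Defensive.
Local Open Scope classical_set_scope.
Local Open Scope ring_scope.

Lemma continuous_Borel_measurable (R : realType) (E : pseudoPMetricType R)
    (k : E -> R) :
  continuous k -> measurable_fun [set: Borel E] k.
Proof.
move=> ck; apply: (measurability _ (RGenOpens.measurableE R)).
move=> _ [_ [a [b ->] <-]]; apply: sub_sigma_algebra.
by rewrite setTI; apply: (continuousP _).1 => //; exact: interval_open.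
Qed.

Section right_continuous_process.
Variables (R : realType) (d : measure_display) (T : measurableType d).
Variable phi : R -> T -> R.
Hypothesis measurable_phi : forall t, 0 <= t -> measurable_fun setT (phi t).
Hypothesis right_continuous_phi :
  forall w t, 0 <= t -> (fun s => phi s w) s @[s --> t^'+] --> phi t w.

(* [grid n s] is the first point of the mesh [1/(n+1)] strictly to the right of [max s 0],
   so by right-continuity [phi (grid n s)] converges to [phi (max s 0)]. *)
Let scaled n (s : R) := n.+1%:R * Num.max s 0.
Let grid n s : R := (Num.truncn (scaled n s)).+1%:R / n.+1%:R.

Let scaled_ge0 n s : 0 <= scaled n s.
Proof. by rewrite mulr_ge0 // le_max lexx orbT. Qed.

Let grid_gt n s : Num.max s 0 < grid n s.
Proof. by rewrite /grid ltr_pdivlMr // mulrC; exact: truncnS_gt. Qed.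

Let grid_le n s : grid n s <= Num.max s 0 + harmonic n.
Proof.
rewrite /grid /= ler_pdivrMr // mulrDl mulVf // mulrC -natr1 lerD2r.
by case/andP: (truncn_itv (scaled_ge0 n s)).
Qed.

Let measurable_grid_level n k :
  measurable [set p : T * R | Num.truncn (scaled n p.2) = k].
Proof.
have -> : [set p : T * R | Num.truncn (scaled n p.2) = k] =
    snd @^-1` [set s | k%:R <= scaled n s < k.+1%:R].
  by apply/seteqP; split => p /=; rewrite -truncn_eq //; [move=> ->|move/eqP].
rewrite -[X in measurable X]setTI; apply: measurable_snd => //.
have scaled_mono : {homo scaled n : s s' / s <= s'}.
  by move=> s s' ss'; rewrite /scaled ler_pM2l // le_max2.
apply: is_interval_measurable => a b /andP[ha _] /andP[_ hb] z /andP[az zb].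
apply/andP; split; first exact: le_trans ha (scaled_mono _ _ az).
exact: le_lt_trans (scaled_mono _ _ zb) hb.
Qed.

Let measurable_grid_process n :
  measurable_fun setT (fun p : T * R => phi (grid n p.2) p.1).
Proof.
move=> _ B mB.
have -> : [set: T * R] `&` (fun p => phi (grid n p.2) p.1) @^-1` B =
    \bigcup_k ([set p : T * R | Num.truncn (scaled n p.2) = k] `&`
               (fst @^-1` (phi (k.+1%:R / n.+1%:R) @^-1` B))).
  apply/seteqP; split => p /=; first by move=> [_ hp]; exists (Num.truncn (scaled n p.2)).
  by move=> [k _ [hk hp]]; split => //; rewrite /grid hk.
apply: bigcupT_measurable => k; apply: measurableI => //.
rewrite -[X in measurable X]setTI; apply: measurable_fst => //.
by rewrite -[X in measurable X]setTI; apply: measurable_phi.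
Qed.

(* Processes are only given at times [t >= 0], hence the clamped time [max s 0]. *)
Lemma measurable_right_continuous_process :
  measurable_fun [set: T * R] (fun p => phi (Num.max p.2 0) p.1).
Proof.
apply: (measurable_fun_cvg (h := fun n p => phi (grid n p.2) p.1)) => // -[w s] _ /=.
have s0 : 0 <= Num.max s 0 by rewrite le_max lexx orbT.
have /cvg_at_rightP := @right_continuous_phi w _ s0.
apply; split=> [n|]; first exact: grid_gt.
apply: (@squeeze_cvgr _ _ _ _ (fun=> Num.max s 0) (fun n => Num.max s 0 + harmonic n)).
- by apply: nearW => n; rewrite (ltW (grid_gt n s)) grid_le.
- exact: cvg_cst.
- by rewrite -[X in _ --> X]addr0; apply: cvgD; [exact: cvg_cst|exact: cvg_harmonic].
Qed.

End right_continuous_process.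

Section integral_over_time.
Variable R : realType.

Lemma lebesgue_measure_itv0 (a : R) : 0 <= a ->
  lebesgue_measure (`[0%R, a] : set R) = a%:E.
Proof.
move=> a0; rewrite lebesgue_measure_itv /= lte_fin.
by case: ltgtP a0 => // [_|<-] _; rewrite ?sube0.
Qed.

Lemma lebesgue_measure_itv0_lty (a : R) : 0 <= a ->
  (lebesgue_measure (`[0%R, a] : set R) < +oo)%E.
Proof. by move=> a0; have /= -> := lebesgue_measure_itv0 a0; exact: ltry. Qed.

Variables (d : measure_display) (T : measurableType d).
Variable phi : R -> T -> R.
Hypothesis measurable_phi :
  measurable_fun [set: T * R] (fun p => phi (Num.max p.2 0) p.1).

Lemma measurable_fun_section_itv (w : T) (a : R) :
  measurable_fun `[0%R, a] (fun s => phi s w).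
Proof.
have : measurable_fun `[0%R, a] (fun s => phi (Num.max s 0) w).
  exact: measurable_funS (measurable_fun_pair2 w measurable_phi).
apply: eq_measurable_fun => s.
by rewrite inE /= in_itv /= => /andP[s0 _]; rewrite max_l.
Qed.

Lemma measurable_fun_integral_itv (S : T -> R) : measurable_fun setT S ->
  measurable_fun setT
    (fun w => \int[lebesgue_measure]_(s in `[0%R, S w]) (phi s w)%:E)%E.
Proof.
move=> mS.
pose u (p : T * R) : \bar R :=
  if (0 <= p.2) && (p.2 <= S p.1) then (phi (Num.max p.2 0) p.1)%:E else 0%E.
have measurable_u : measurable_fun setT u.
  apply: measurable_fun_ifT; last exact: measurable_cst.
    apply: measurable_and; apply: measurable_fun_ler => //; exact: measurableT_comp.
  exact/measurable_EFinP.
have -> : (fun w => \int[lebesgue_measure]_(s in `[0%R, S w]) (phi s w)%:E)%E =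
    (fun w => \int[lebesgue_measure]_s (funepos u (w, s))
              - \int[lebesgue_measure]_s (funeneg u (w, s)))%E.
  apply/funext => w; rewrite integral_mkcond integralE.
  have -> : ((fun s => (phi s w)%:E) \_ `[0%R, S w]) = (fun s => u (w, s)).
    apply/funext => s; rewrite /patch /u /= mem_setE in_itv /=.
    by case: ifP => [/andP[s0 _]|//]; rewrite max_l.
  by congr (_ - _)%E; apply: eq_integral => s _; rewrite ?funeposE ?funenegE.
have mpos := measurable_fun_fubini_tonelli_F (m2 := lebesgue_measure) (funepos u)
  (measurable_funepos measurable_u) (funepos_ge0 u).
have mneg := measurable_fun_fubini_tonelli_F (m2 := lebesgue_measure) (funeneg u)
  (measurable_funeneg measurable_u) (funeneg_ge0 u).
exact: emeasurable_funB mpos mneg.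
Qed.

Variables (w : T) (M : R).
Hypothesis phi_bounded : forall s, `|phi s w| <= M.

Lemma integrable_itv_bounded (a : R) : 0 <= a ->
  lebesgue_measure.-integrable `[0%R, a] (EFin \o (fun s => phi s w)).
Proof.
move=> a0; apply: measurable_bounded_integrable => //.
- exact: lebesgue_measure_itv0_lty.
- exact: measurable_fun_section_itv.
- exists M; split; first exact: num_real.
  by move=> y My s _; apply: le_trans (phi_bounded s) (ltW My).
Qed.

Lemma abse_integral_itv_le (a : R) : 0 <= a ->
  (`| \int[lebesgue_measure]_(s in `[0%R, a]) (phi s w)%:E | <= (M * a)%:E)%E.
Proof.
move=> a0; have mphi : measurable_fun `[0%R, a] (fun s => (phi s w)%:E).
  by apply/measurable_EFinP; exact: measurable_fun_section_itv.
apply: le_trans (le_abse_integral lebesgue_measure (measurable_itv _) mphi) _.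
rewrite EFinM -(lebesgue_measure_itv0 a0) -integral_cst //.
apply: ge0_le_integral => //; first exact: measurableT_comp.
by move=> s _; rewrite lee_fin (le_trans _ (phi_bounded s)).
Qed.

Lemma integral_itv_subr (a k : R) : 0 <= a ->
  (\int[lebesgue_measure]_(s in `[0%R, a]) (phi s w - k)%:E =
   \int[lebesgue_measure]_(s in `[0%R, a]) (phi s w)%:E + (- k * a)%:E)%E.
Proof.
move=> a0; under eq_integral do rewrite EFinB.
have cst_int : lebesgue_measure.-integrable `[0%R, a] (EFin \o (fun=> k)).
  apply: measurable_bounded_integrable => //; last exact: bounded_cst.
  exact: lebesgue_measure_itv0_lty.
rewrite (integralB_EFin _ (integrable_itv_bounded a0) cst_int) //.
by rewrite integral_cst //= lebesgue_measure_itv0 // mulNr EFinN -EFinM.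
Qed.

End integral_over_time.

Lemma le_liminfT_addr (R : realType) (u v : R -> \bar R) (k T0 : R) :
  (forall T, T0 <= T -> (u T + k%:E <= v T)%E) ->
  (liminfT u + k%:E <= liminfT v)%E.
Proof.
move=> uv; rewrite -leeBrDr //; apply: ge_ereal_sup => _ [M _ <-].
pose M' := Num.max M T0.
have M'_le T : M' <= T -> M <= T /\ T0 <= T.
  by move=> hT; split; apply: le_trans hT; rewrite le_max lexx ?orbT.
apply: (@le_trans _ _ (ereal_inf [set u T | T in [set T | M' <= T]])).
  apply: le_ereal_inf_tmp => _ [T /= hT <-]; apply: ereal_inf_lbound.
  by exists T => //; case: (M'_le T hT).
rewrite leeBrDr //.
apply: (@le_trans _ _ (ereal_inf [set v T | T in [set T | M' <= T]])).
  apply: le_ereal_inf_tmp => _ [T /= hT <-]; case: (M'_le T hT) => _ /uv.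
  by apply: le_trans; rewrite leeD2r //; apply: ereal_inf_lbound; exists T.
by apply: ereal_sup_ubound; exists M'.
Qed.

Lemma lee_pdivrM_of_leD (R : realType) (L : \bar R) (G Z s c : R) : 0 < c ->
  (L + (- Z + c * s)%:E <= G%:E)%E -> (s%:E <= (G%:E + Z%:E - L) * c^-1%:E)%E.
Proof.
move=> c0; case: L => [l| |] /=.
- by rewrite -!EFinD -EFinM !lee_fin ler_pdivlMr // => ?; lra.
- by rewrite addye.
- by rewrite addey // gt0_mulye ?leey // lte_fin invr_gt0.
Qed.

Lemma le_integral_measurable d (T : measurableType d) (R : realType)
    (mu : {measure set T -> \bar R}) (u v : T -> \bar R) :
  measurable_fun setT u -> measurable_fun setT v -> (forall w, (u w <= v w)%E) ->
  (\int[mu]_w u w <= \int[mu]_w v w)%E.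
Proof.
move=> mu' mv uv; rewrite [leLHS]integralE [leRHS]integralE; apply: leeB.
  apply: ge0_le_integral => //; [exact: measurable_funepos|exact: measurable_funepos|].
  by move=> w _; apply: (@funepos_le _ _ setT); [move=> z _; exact: uv|rewrite inE].
apply: ge0_le_integral => //; [exact: measurable_funeneg|exact: measurable_funeneg|].
by move=> w _; apply: (@funeneg_le _ _ setT); [move=> z _; exact: uv|rewrite inE].
Qed.

Section stopping_times.
Variables (R : realType) (d : measure_display) (Omega : measurableType d).
Implicit Types (tau : Omega -> \bar R) (T : R).

Lemma stopTE tau T w : (0 <= tau w)%E -> 0 <= T ->
  (stopT tau T w)%:E = Order.min (tau w) T%:E.
Proof. by move=> + T0; rewrite /stopT; case: (tau w) => [r||] //= r0; rewrite -EFin_min. Qed.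

Lemma stopT_itv tau T w : (0 <= tau w)%E -> 0 <= T -> 0 <= stopT tau T w <= T.
Proof.
move=> tau0 T0; rewrite -!lee_fin stopTE // le_min tau0 lee_fin T0 /=.
by rewrite ge_min lexx orbT.
Qed.

Lemma le_stopT tau T1 T2 w : (0 <= tau w)%E -> 0 <= T1 -> T1 <= T2 ->
  stopT tau T1 w <= stopT tau T2 w.
Proof.
move=> tau0 T10 T12; rewrite -lee_fin !stopTE ?(le_trans T10 T12) //.
by apply: le_min2 => //; rewrite lee_fin.
Qed.

Lemma stopT_cvg tau w : (0 <= tau w)%E ->
  (fun n : nat => (stopT tau n%:R w)%:E) @ \oo --> tau w.
Proof.
case Htau: (tau w) => [r||] // r0.
  apply: cvg_near_cst; near=> n; rewrite stopTE ?Htau // minEle lee_fin ifT //.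
  near: n; exists (Num.truncn r).+1 => // n /= rn.
  by apply/ltW/(lt_le_trans (truncnS_gt r)); rewrite ler_nat.
have -> : (fun n : nat => (stopT tau n%:R w)%:E) = (fun n : nat => n%:R%:E).
  by apply/funext => n; rewrite stopTE ?Htau // minEle leye_eq.
exact/cvgenyP.
Unshelve. all: by end_near.
Qed.

Lemma measurable_stopT tau T : measurable_fun setT tau ->
  measurable_fun setT (stopT tau T).
Proof. by move=> mtau; apply: measurableT_comp => //; exact: measurable_mine. Qed.

Lemma integral_stopping_time_le (mu : {measure set Omega -> \bar R}) tau (b : \bar R) :
  measurable_fun setT tau -> (forall w, 0 <= tau w)%E ->
  (forall n : nat, \int[mu]_w (stopT tau n%:R w)%:E <= b)%E ->
  (\int[mu]_w tau w <= b)%E.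
Proof.
move=> mtau tau0 bounded.
have mS n : measurable_fun setT (fun w => (stopT tau n%:R w)%:E).
  exact/measurable_EFinP/measurable_stopT.
have S0 n w : (0 <= (stopT tau n%:R w)%:E)%E.
  by rewrite lee_fin; case/andP: (stopT_itv (tau0 w) (ler0n _ n)).
have S_mono w m n : (m <= n)%N -> (stopT tau m%:R w <= stopT tau n%:R w).
  by move=> mn; apply: le_stopT => //; rewrite ler_nat.
rewrite (eq_integral (fun w => limn (fun n : nat => (stopT tau n%:R w)%:E))); last first.
  by move=> w _; apply/esym/cvg_lim => //; exact: stopT_cvg.
rewrite (monotone_convergence _ _ mS) //; last by move=> w _ m n mn; rewrite lee_fin S_mono.
apply: lime_le; last exact: nearW.
apply: ereal_nondecreasing_is_cvgn => m n mn; apply: ge0_le_integral => //.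
by move=> w _; rewrite lee_fin S_mono.
Qed.

Variable F : R -> set (set Omega).

Lemma stopping_time_measurable tau :
  (forall t, 0 <= t -> F t `<=` measurable) -> stopping_time F tau ->
  measurable_fun setT tau.
Proof.
move=> FM [tau0 tauF].
apply: (measurability _ (ErealGenOInfty.measurableE R)) => _ [_ [r ->] <-].
rewrite setTI; have [r0|r0] := leP 0 r.
  have -> : tau @^-1` `]r%:E, +oo[ = ~` [set w | (tau w <= r%:E)%E].
    by apply/seteqP; split => w /=; rewrite in_itv /= andbT ltNge => /negP.
  exact/measurableC/(FM r r0)/tauF.
have -> : tau @^-1` `]r%:E, +oo[ = setT.
  apply/seteqP; split => w //= _; rewrite in_itv /= andbT.
  by apply: lt_le_trans (tau0 w); rewrite lte_fin.
exact: measurableT.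
Qed.

Lemma stopping_time_cst0 :
  (forall t, 0 <= t -> sigma_algebra setT (F t)) ->
  stopping_time F (fun=> 0%E).
Proof.
move=> FS; split => // t t0.
have -> : [set w : Omega | (0 <= t%:E)%E] = setT.
  by apply/seteqP; split => w //= _; rewrite lee_fin.
by have [F0 FC _] := FS t t0; rewrite -(setD0 setT); exact: FC.
Qed.

End stopping_times.

Section stopped_payoff.
Variables (R : realType) (E : pseudoPMetricType R).
Variables (dO : measure_display) (Omega : measurableType dO).
Variables (F : R -> set (set Omega)) (P : E -> probability Omega R).
Variable X : R -> Omega -> E.
Hypothesis F_sigma : forall t, 0 <= t -> sigma_algebra setT (F t).
Hypothesis F_measurable : forall t, 0 <= t -> F t `<=` measurable.
Hypothesis X_adapted : forall t, 0 <= t ->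
  forall B : set (Borel E), measurable B -> F t (X t @^-1` B).
Hypothesis X_right_continuous :
  forall w t, 0 <= t -> (X ^~ w) s @[s --> t^'+] --> X t w.

Lemma gammafun_ge0 (f : E -> R) (dx : R) (x : E) : (0 <= gammafun P X F f dx x)%E.
Proof.
have payoff0 T : 0 <= T ->
    payoff P X (fun y => f y - dx) (fun=> 0) x (fun=> 0%E) T = 0%E.
  move=> T0; rewrite /payoff; under eq_integral => w _.
    by rewrite /stopT minEle lee_fin T0 /= set_itv1 integral_set1 adde0; over.
  exact: integral0.
apply: le_trans (ereal_sup_ubound _); last first.
  by exists (fun=> 0%E); first exact: stopping_time_cst0.
apply: le_trans (ereal_sup_ubound _); last by exists 0.
by apply: le_ereal_inf_tmp => _ [T /= T0 <-]; rewrite payoff0.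
Qed.

Lemma measurable_fun_process (k : E -> R) t : continuous k -> 0 <= t ->
  measurable_fun setT (fun w => k (X t w)).
Proof.
move=> ck t0; have mX : @measurable_fun _ _ Omega (Borel E) setT (X t).
  by move=> _ B mB; rewrite setTI; exact: F_measurable t0 _ (X_adapted t0 mB).
exact: measurableT_comp (continuous_Borel_measurable ck) mX.
Qed.

Lemma measurable_fun_process_prod (k : E -> R) : continuous k ->
  measurable_fun [set: Omega * R] (fun p => k (X (Num.max p.2 0) p.1)).
Proof.
move=> ck; apply: (@measurable_right_continuous_process _ _ _ (fun s w => k (X s w))).
  by move=> t; exact: measurable_fun_process.
by move=> w t t0; exact: cvg_comp (@X_right_continuous w _ t0) (ck _).
Qed.

Lemma measurable_fun_stopped_process (k : E -> R) tau T :
  continuous k -> stopping_time F tau -> 0 <= T ->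
  measurable_fun setT (fun w => k (X (stopT tau T w) w)).
Proof.
move=> ck tau_stop T0.
have mtau := stopping_time_measurable F_measurable tau_stop.
have := measurableT_comp (measurable_fun_process_prod ck)
  (measurable_fun_pair (@measurable_id _ Omega setT) (measurable_stopT T mtau)).
apply: eq_measurable_fun => w _ /=.
by case/andP: (stopT_itv (tau_stop.1 w) T0) => S0 _; rewrite max_l.
Qed.

Variables (f g : E -> R) (M : R) (x : E).
Hypothesis f_continuous : continuous f.
Hypothesis f_bounded : forall y, `|f y| <= M.
Hypothesis g_continuous : continuous g.
Hypothesis zeta_plus_integrable : (P x).-integrable setT (zeta_plus X g).

Variable tau : Omega -> \bar R.
Hypothesis tau_stopping : stopping_time F tau.

Let S T := stopT tau T.
Let running T w := (\int[lebesgue_measure]_(s in `[0%R, S T w]) (f (X s w))%:E)%E.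
Let Zplus := (\int[P x]_w zeta_plus X g w)%E.

Let Zplus_fin : Zplus \is a fin_num.
Proof. by have := integrable_fin_num measurableT zeta_plus_integrable. Qed.

Let S_itv T w : 0 <= T -> 0 <= S T w <= T.
Proof. exact: stopT_itv (tau_stopping.1 w). Qed.

Let measurable_S T : measurable_fun setT (S T).
Proof. exact/measurable_stopT/(stopping_time_measurable F_measurable tau_stopping). Qed.

Let measurable_running T : measurable_fun setT (running T).
Proof.
exact: (@measurable_fun_integral_itv _ _ _ (fun s w => f (X s w))
  (measurable_fun_process_prod f_continuous) _ (measurable_S T)).
Qed.

Let integrable_S T : 0 <= T -> (P x).-integrable setT (EFin \o S T).
Proof.
move=> T0; apply: (le_integrable measurableT (g := fun=> T%:E)).
- exact/measurable_EFinP.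
- move=> w _ /=; case/andP: (S_itv w T0) => S0 ST.
  by rewrite lee_fin !ger0_norm ?(le_trans S0).
- exact: finite_measure_integrable_cst.
Qed.

Let integrable_running T : 0 <= T -> (P x).-integrable setT (running T).
Proof.
move=> T0; have M0 : 0 <= M := le_trans (normr_ge0 _) (f_bounded x).
apply: (le_integrable measurableT (g := fun=> (M * T)%:E)).
- exact: measurable_running.
- move=> w _; case/andP: (S_itv w T0) => S0 ST.
  rewrite [leRHS]gee0_abs ?lee_fin ?mulr_ge0 //.
  apply: le_trans (@abse_integral_itv_le _ _ _ (fun s w => f (X s w))
    (measurable_fun_process_prod f_continuous) w M (fun s => f_bounded (X s w)) _ S0) _.
  by rewrite lee_fin ler_wpM2l.
- exact: finite_measure_integrable_cst.
Qed.

Lemma payoff_subr_cst (dx T : R) : 0 <= T ->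
  payoff P X (fun y => f y - dx) (fun=> 0) x tau T =
  (\int[P x]_w running T w + (- dx)%:E * \int[P x]_w (S T w)%:E)%E.
Proof.
move=> T0; rewrite /payoff.
under eq_integral => w _.
  rewrite adde0 (@integral_itv_subr _ _ _ (fun s w => f (X s w))
    (measurable_fun_process_prod f_continuous) w M (fun s => f_bounded (X s w)));
    last by case/andP: (S_itv w T0).
  over.
rewrite integralD //; [|exact: integrable_running|exact: integrableZl (integrable_S T0)].
by rewrite -integralZl //; exact: integrable_S.
Qed.

Lemma payoff_le_zeta_plus T : 0 <= T ->
  (payoff P X f g x tau T <= \int[P x]_w running T w + Zplus)%E.
Proof.
move=> T0; rewrite /payoff /Zplus -integralD //; last exact: integrable_running.
apply: le_integral_measurable.
- apply: emeasurable_funD.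
    exact: measurable_running.
  apply/measurable_EFinP.
  exact: measurable_fun_stopped_process g_continuous tau_stopping T0.
- apply: emeasurable_funD; last exact: measurable_int zeta_plus_integrable.
  exact: measurable_running.
- move=> w; apply: leeD2l; apply: le_trans (ereal_sup_ubound _); last first.
    by exists (S T w) => //; case/andP: (S_itv w T0).
  by rewrite lee_fin le_max lexx.
Qed.

Lemma liminf_payoff_le (dx T0 : R) : dx <= 0 -> 0 <= T0 ->
  (liminfT (payoff P X f g x tau) + (- Zplus + (- dx)%:E * \int[P x]_w (S T0 w)%:E)
   <= liminfT (payoff P X (fun y => (f y - dx)%R) (fun=> 0%R) x tau))%E.
Proof.
move=> dx0 T00.
have shift_fin : (- Zplus + (- dx)%:E * \int[P x]_w (S T0 w)%:E)%E \is a fin_num.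
  rewrite fin_numD fin_numN Zplus_fin fin_numM //.
  by have := integrable_fin_num measurableT (integrable_S T00).
rewrite -(fineK shift_fin); apply: le_liminfT_addr => T T0T.
have T0' := le_trans T00 T0T.
have payoff_Z : (payoff P X f g x tau T - Zplus <= \int[P x]_w running T w)%E.
  by rewrite leeBlDr // payoff_le_zeta_plus.
rewrite fineK // payoff_subr_cst // addeA; apply: leeD payoff_Z _.
apply: lee_wpmul2l; first by rewrite lee_fin oppr_ge0.
apply: ge0_le_integral => //; first by move=> w _; rewrite lee_fin; case/andP: (S_itv w T00).
- exact/measurable_EFinP.
- exact/measurable_EFinP.
- by move=> w _; rewrite lee_fin le_stopT // (tau_stopping.1 w).
Qed.

Lemma integral_stopping_time_le_gammafun (dx : R) : dx < 0 ->
  (gammafun P X F f dx x < +oo)%E ->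
  (\int[P x]_w tau w <=
   (gammafun P X F f dx x + Zplus - liminfT (payoff P X f g x tau))
   * ((- dx)^-1)%:E)%E.
Proof.
move=> dx_lt0 G_lty.
have G_fin : gammafun P X F f dx x \is a fin_num by rewrite ge0_fin_numE ?gammafun_ge0.
apply: integral_stopping_time_le; [exact: stopping_time_measurable tau_stopping
                                   | exact: tau_stopping.1 | move=> n].
have S_fin : (\int[P x]_w (stopT tau n%:R w)%:E)%E \is a fin_num.
  by have := integrable_fin_num measurableT (integrable_S (ler0n R n)).
rewrite -(fineK G_fin) -(fineK Zplus_fin) -(fineK S_fin).
apply: lee_pdivrM_of_leD; first by rewrite oppr_gt0.
rewrite EFinD EFinN EFinM !fineK //.
apply: le_trans (liminf_payoff_le (ltW dx_lt0) (ler0n R n)) _.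
by apply: ereal_sup_ubound; exists tau.
Qed.

End stopped_payoff.

Theorem mainTheorem12 (R : realType) (E : pseudoPMetricType R)
  (dO : measure_display) (Omega : measurableType dO)
  (F : R -> set (set Omega)) (P : E -> probability Omega R)
  (X : R -> Omega -> E)
  (mu : probability (Borel E) R) (K : E -> R) (h : R -> R)
  (f g : E -> R) (dfun : E -> R) :
  hausdorff_space E -> locally_compact [set: E] ->
  markov_process F P X ->
  A1 P X -> A2 P X mu K h ->
  continuous f -> (exists M : R, forall y, `|f y| <= M) ->
  continuous g ->
  (forall T : R, 0 < T -> condB P X g T) ->
  C1 P X g -> C2 P X F g -> C3 P X F f dfun ->
  forall (x : E) (eps : R) (sigma : Omega -> \bar R), 0 < eps ->
  eps_optimal P X F f g x eps sigma ->
  (\int[P x]_w sigma w <=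
   (gammafun P X F f (dfun x) x + \int[P x]_w zeta_plus X g w
    - wfun P X F f g x + eps%:E) * ((- dfun x)^-1)%:E)%E.
Proof.
move=> _ _ [[F_sigma F_meas _] X_adapted X_rc _ _] _ _ f_cont [M f_bd] g_cont _ C1g _ C3f.
move=> x eps sigma _ [sigma_stopping sigma_opt].
have [dx_lt0 G_lty] := C3f x.
apply: le_trans (integral_stopping_time_le_gammafun F_sigma F_meas X_adapted X_rc
  f_cont f_bd g_cont (C1g x) sigma_stopping dx_lt0 G_lty) _.
apply: lee_wpmul2r; first by rewrite lee_fin invr_ge0 oppr_ge0 ltW.
move: (gammafun _ _ _ _ _ _ + _)%E => GZ.
rewrite -addeA; apply: leeD2l.
by rewrite -oppeB ?fin_num_adde_defl // leeN2.
Qed.
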